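(* Let $T$ be a word in the letters $a,b$ of Type I or of Type II. Then $\mathcal{Z}(T)>\tfrac13$ if and only if $\mathcal{Z}(\overline{U}(T))>\tfrac13$, and $\mathcal{Z}(T)>\tfrac13$ if and only if $\mathcal{Z}(\overline{V}(T))>\tfrac13$.
   Context: A chain is a finite sequence $T=[a_1\dots a_n]$ of positive integers; for such $T$ define $\mathcal{Z}(T)=\big(\max_{1\le i\le n}([a_i;a_{i+1},\dots,a_n]+[0;a_{i-1},\dots,a_1])\big)^{-1}$ (finite continued fractions; for $i=1$ the second summand is $0$). Write $a=[22]$ and $b=[11]$; a finite word in the letters $a,b$ is identified with the chain obtained by concatenation. A word is of Type I if it equals $b^{e_1}ab^{e_2}a\cdots ab^{e_n}$ and of Type II if it equals $ba^{e_1}ba^{e_2}b\cdots ba^{e_n}b$, for some $n\ge1$ and integers $e_i\ge1$. The Nielsen moves are the substitutions $U:a\mapsto ab,\ b\mapsto b$ and $V:a\mapsto a,\ b\mapsto ab$ applied letterwise to finite words. For a word $T$ define $\overline{U}(T)=b\,U(T)$ and, when $T$ begins with $b$ (so $V(T)$ begins with $a$), $\overline{V}(T)=a^{-1}V(T)$, the word $V(T)$ with its first letter $a$ deleted. *)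

From mathcomp Require Import all_boot all_order all_algebra.
Set Implicit Arguments. Unset Strict Implicit. Unset Printing Implicit Defensive.
Import Order.TTheory GRing.Theory Num.Theory.
Local Open Scope ring_scope.

Definition chain := seq nat.

(* cf [:: x1; ...; xk] = [x1; x2, ..., xk]  (finite continued fraction);
   cf0 s = [0; s] = 1 / cf s, and cf0 [::] = 0. *)
Fixpoint cf (s : chain) : rat :=
  match s with
  | [::] => 0
  | x :: s' => x%:R + (if s' is [::] then 0 else (cf s')^-1)
  end.
Definition cf0 (s : chain) : rat := if s is [::] then 0 else (cf s)^-1.

(* For 0 <= i < size T (i.e. index i+1 in the paper):
   [a_{i+1}; a_{i+2}, ..., a_n] + [0; a_i, ..., a_1]. *)
Definition zterm (T : chain) (i : nat) : rat :=
  cf (drop i T) + cf0 (rev (take i T)).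

Definition zmax (T : chain) : rat :=
  foldr Num.max 0 [seq zterm T i | i <- iota 0 (size T)].

Definition Zc (T : chain) : rat := (zmax T)^-1.

Inductive letter := La | Lb.
Definition word := seq letter.

Definition chain_of_letter (l : letter) : chain :=
  match l with La => [:: 2%N; 2%N] | Lb => [:: 1%N; 1%N] end.
Definition chain_of (w : word) : chain := flatten (map chain_of_letter w).

Definition typeI (w : word) : Prop :=
  exists (e1 : nat) (es : seq nat),
    (0 < e1)%N /\ all (fun e => 0 < e)%N es /\
    w = nseq e1 Lb ++ flatten [seq La :: nseq e Lb | e <- es].

Definition typeII (w : word) : Prop :=
  exists es : seq nat,
    es <> [::] /\ all (fun e => 0 < e)%N es /\
    w = flatten [seq Lb :: nseq e La | e <- es] ++ [:: Lb].

Definition U (w : word) : word :=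
  flatten [seq (match l with La => [:: La; Lb] | Lb => [:: Lb] end) | l <- w].
Definition V (w : word) : word :=
  flatten [seq (match l with La => [:: La] | Lb => [:: La; Lb] end) | l <- w].

Definition Ubar (w : word) : word := Lb :: U w.
(* Only used when w begins with b, so that V w begins with a: delete it. *)
Definition Vbar (w : word) : word := behead (V w).

(* Write [cfw W] for [[0; chain_of W]]. The letters a = [2 2] and b = [1 1]
   contribute pairs of equal digits, so comparing values of [cfw] amounts to
   comparing words lexicographically with a < b. The terms of [zmax] at the
   digits of a letter b are always below 3, and at the two digits of an a in
   [X a Y] they are below 3 exactly when rev X < b Y and Y < b rev X. Hence
   Z(T) > 1/3 is a purely combinatorial condition on T, and U and V, being
   monotone for the lexicographic order, transport it between T and its
   images. *)

From mathcomp Require Import all_boot all_order all_algebra.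
From mathcomp Require Import ring lra zify.
Import Order.TTheory GRing.Theory Num.Theory.
Local Open Scope ring_scope.

Lemma cf_cons x s : cf (x :: s) = x%:R + cf0 s.
Proof. by case: s. Qed.

Lemma cf0_cf s : cf0 s = (cf s)^-1.
Proof. by case: s => [|x s] //=; rewrite invr0. Qed.

Lemma chain_of_cat s t : chain_of (s ++ t) = chain_of s ++ chain_of t.
Proof. by rewrite /chain_of map_cat flatten_cat. Qed.

Definition digit (l : letter) : nat := if l is La then 2 else 1.

Lemma digit_gt0 l : (0 < digit l)%N.
Proof. by case: l. Qed.

Lemma chain_of_cons l s : chain_of (l :: s) = [:: digit l, digit l & chain_of s].
Proof. by case: l. Qed.

Lemma chain_of_cat_cons X l Y :
  chain_of (X ++ l :: Y) = chain_of X ++ [:: digit l, digit l & chain_of Y].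
Proof. by rewrite chain_of_cat chain_of_cons. Qed.

Lemma rev_chain_of s : rev (chain_of s) = chain_of (rev s).
Proof.
elim: s => [|l s IHs] //.
by rewrite chain_of_cons !rev_cons IHs -!cats1 chain_of_cat chain_of_cons -catA.
Qed.

Lemma size_chain_of s : size (chain_of s) = (2 * size s)%N.
Proof. by elim: s => [|l s IHs] //; rewrite chain_of_cons /= IHs mulnS. Qed.

Definition cfw (W : word) : rat := cf0 (chain_of W).

Definition cf_step (k : nat) (t : rat) : rat := (k%:R + (k%:R + t)^-1)^-1.

Lemma cfw_cons l W : cfw (l :: W) = cf_step (digit l) (cfw W).
Proof. by rewrite /cfw /cf_step chain_of_cons /=; case: (chain_of W). Qed.

Section CfStep.
Variables (k : nat) (k_gt0 : (0 < k)%N).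

Let kR_ge1 : 1 <= k%:R :> rat. Proof. by rewrite ler1n. Qed.

Lemma cf_step_gt0 t : 0 <= t -> 0 < cf_step k t.
Proof.
move=> t_ge0; have k_ge1 := kR_ge1.
have inv_gt0 : 0 < (k%:R + t)^-1 by rewrite invr_gt0; lra.
by rewrite /cf_step invr_gt0; lra.
Qed.

Lemma cf_step_lt1 t : 0 <= t -> cf_step k t < 1.
Proof.
move=> t_ge0; have k_ge1 := kR_ge1.
have inv_gt0 : 0 < (k%:R + t)^-1 by rewrite invr_gt0; lra.
by rewrite /cf_step invf_lt1; lra.
Qed.

Lemma cf_step_lt s t : 0 <= s -> s < t -> cf_step k s < cf_step k t.
Proof.
move=> s_ge0 st; have k_ge1 := kR_ge1.
have inv_gt0 : 0 < (k%:R + t)^-1 by rewrite invr_gt0; lra.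
have inv_lt : (k%:R + t)^-1 < (k%:R + s)^-1 by rewrite ltf_pV2 ?posrE; lra.
by rewrite /cf_step ltf_pV2 ?posrE; lra.
Qed.

End CfStep.

Lemma cf_step_lt_21 s t : 0 <= s -> 0 <= t -> cf_step 2 s < cf_step 1 t.
Proof.
move=> s_ge0 t_ge0.
have inv2_gt0 : 0 < (2%:R + s)^-1 :> rat by rewrite invr_gt0; lra.
have inv1_gt0 : 0 < (1%:R + t)^-1 :> rat by rewrite invr_gt0; lra.
have inv1_le1 : (1%:R + t)^-1 <= 1 :> rat by rewrite invf_le1; lra.
by rewrite /cf_step ltf_pV2 ?posrE; lra.
Qed.

Lemma cfw_ge0 W : 0 <= cfw W.
Proof.
elim: W => [|l W IHW]; first by rewrite /cfw.
by rewrite cfw_cons ltW ?cf_step_gt0 ?digit_gt0.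
Qed.

Lemma cfw_lt1 W : cfw W < 1.
Proof.
case: W => [|l W]; first by rewrite /cfw /= ltr01.
by rewrite cfw_cons cf_step_lt1 ?digit_gt0 ?cfw_ge0.
Qed.

Lemma cfw_Lb W : cfw (Lb :: W) = 1 - (2%:R + cfw W)^-1.
Proof.
have := cfw_ge0 W; rewrite cfw_cons /cf_step /= => W_ge0.
by field; rewrite !gt_eqF //; lra.
Qed.

Fixpoint wlt (s t : word) : bool :=
  match s, t with
  | _, [::] => false
  | [::], _ :: _ => true
  | x :: s', y :: t' =>
      match x, y with
      | La, Lb => true
      | Lb, La => false
      | _, _ => wlt s' t'
      end
  end.

Lemma wlt_cfw s t : wlt s t -> cfw s < cfw t.
Proof.
elim: s t => [|x s IHs] [|y t] //= st.
  by rewrite cfw_cons cf_step_gt0 ?digit_gt0 ?cfw_ge0.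
rewrite !cfw_cons.
by case: x st; case: y => //= st;
  rewrite ?cf_step_lt_21 ?cf_step_lt ?cfw_ge0 ?IHs.
Qed.

Lemma wlt_total s t : ~~ wlt s t -> s = t \/ wlt t s.
Proof.
elim: s t => [|x s IHs] [|y t] //=; [by left | by right | ].
by case: x; case: y => //=; try move=> /IHs [->|]; auto.
Qed.

Lemma cfw_ltE s t : (cfw s < cfw t) = wlt s t.
Proof.
apply/idP/idP => [st|]; last exact: wlt_cfw.
apply/negPn/negP => /wlt_total [eq_st | /wlt_cfw ts]; move: st.
  by rewrite eq_st ltxx.
by rewrite ltNge ltW.
Qed.

Lemma zterm_letter X l Y :
  zterm (chain_of (X ++ l :: Y)) (size (chain_of X)) =
  (digit l)%:R + ((digit l)%:R + cfw Y)^-1 + cfw (rev X).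
Proof.
rewrite /zterm chain_of_cat_cons drop_size_cat // take_size_cat //.
by rewrite rev_chain_of cf_cons [cf0 (_ :: _)]cf0_cf cf_cons.
Qed.

Lemma zterm_letterS X l Y :
  zterm (chain_of (X ++ l :: Y)) (size (chain_of X)).+1 =
  (digit l)%:R + cfw Y + ((digit l)%:R + cfw (rev X))^-1.
Proof.
rewrite /zterm chain_of_cat_cons -cat_rcons drop_size_cat ?size_rcons //.
rewrite take_size_cat ?size_rcons // rev_rcons rev_chain_of.
by rewrite cf_cons [cf0 (_ :: _)]cf0_cf cf_cons.
Qed.

Lemma zterm_Lb_lt3 X Y : zterm (chain_of (X ++ Lb :: Y)) (size (chain_of X)) < 3%:R.
Proof.
rewrite zterm_letter /=; have Y_ge0 := cfw_ge0 Y; have X_lt1 := cfw_lt1 (rev X).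
have inv_le1 : (1%:R + cfw Y)^-1 <= 1 :> rat by rewrite invf_le1; lra.
lra.
Qed.

Lemma zterm_Lb_lt3S X Y : zterm (chain_of (X ++ Lb :: Y)) (size (chain_of X)).+1 < 3%:R.
Proof.
rewrite zterm_letterS /=; have X_ge0 := cfw_ge0 (rev X); have Y_lt1 := cfw_lt1 Y.
have inv_le1 : (1%:R + cfw (rev X))^-1 <= 1 :> rat by rewrite invf_le1; lra.
lra.
Qed.

Lemma zterm_La_lt3E X Y :
  (zterm (chain_of (X ++ La :: Y)) (size (chain_of X)) < 3%:R) = wlt (rev X) (Lb :: Y).
Proof. by rewrite zterm_letter -cfw_ltE cfw_Lb /=; apply/idP/idP => ?; lra. Qed.

Lemma zterm_La_lt3SE X Y :
  (zterm (chain_of (X ++ La :: Y)) (size (chain_of X)).+1 < 3%:R) = wlt Y (Lb :: rev X).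
Proof. by rewrite zterm_letterS -cfw_ltE cfw_Lb /=; apply/idP/idP => ?; lra. Qed.

Definition admissible (w : word) : Prop :=
  forall X Y, w = X ++ La :: Y -> wlt (rev X) (Lb :: Y) /\ wlt Y (Lb :: rev X).

Lemma chain_of_index_split w i : (i < size (chain_of w))%N ->
  exists X l Y, w = X ++ l :: Y /\
    (i = size (chain_of X) \/ i = (size (chain_of X)).+1).
Proof.
rewrite size_chain_of => lt_i; have := odd_double_half i; rewrite -muln2 => i_eq.
exists (take i./2 w), (nth La w i./2), (drop i./2.+1 w); split.
  by rewrite -drop_nth ?cat_take_drop //; lia.
rewrite size_chain_of size_takel; last lia.
by case: (odd i) i_eq => /= i_eq; lia.
Qed.

Lemma zterms_lt3P w :
  all (fun z => z < 3%:R) [seq zterm (chain_of w) i | i <- iota 0 (size (chain_of w))]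
  <-> admissible w.
Proof.
split => [/allP lt3 X Y w_eq | adm].
  have lt3_at i : (i < size (chain_of w))%N -> zterm (chain_of w) i < 3%:R.
    by move=> lt_i; apply/lt3/map_f; rewrite mem_iota.
  have ltX : ((size (chain_of X)).+1 < size (chain_of w))%N.
    by rewrite w_eq !size_chain_of size_cat /=; lia.
  have := lt3_at _ ltX; have := lt3_at _ (ltnW ltX).
  by rewrite w_eq zterm_La_lt3E zterm_La_lt3SE.
apply/allP => z /mapP [i]; rewrite mem_iota => /= /chain_of_index_split.
move=> [X [[] [Y [w_eq i_eq]]]] ->; rewrite w_eq.
- have [ltX ltY] := adm X Y w_eq.
  by case: i_eq => ->; rewrite ?zterm_La_lt3E ?zterm_La_lt3SE.
- by case: i_eq => ->; rewrite ?zterm_Lb_lt3 ?zterm_Lb_lt3S.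
Qed.

Lemma foldr_max_ltE (l : seq rat) m : 0 < m ->
  (foldr Num.max 0 l < m) = all (fun z => z < m) l.
Proof. by move=> m_gt0; elim: l => [|z l IHl] //=; rewrite gt_max IHl. Qed.

Lemma zmax_gt0 l w : 0 < zmax (chain_of (l :: w)).
Proof.
have d_gt0 : 0 < (digit l)%:R :> rat by rewrite ltr0n digit_gt0.
have w_ge0 := cfw_ge0 w; have nil_ge0 := cfw_ge0 [::].
have inv_gt0 : 0 < ((digit l)%:R + cfw w)^-1 by rewrite invr_gt0; lra.
rewrite /zmax size_chain_of mulnS /= lt_max; apply/orP; left.
by have /= -> := zterm_letter [::] l w; lra.
Qed.

Lemma Zc_gt_thirdP l w :
  3%:R^-1 < Zc (chain_of (l :: w)) <-> admissible (l :: w).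
Proof.
by rewrite /Zc ltf_pV2 ?posrE ?ltr0n ?zmax_gt0 // foldr_max_ltE ?ltr0n //;
  exact: zterms_lt3P.
Qed.

Lemma U_cat s t : U (s ++ t) = U s ++ U t.
Proof. by rewrite /U map_cat flatten_cat. Qed.

Lemma U_cons l s : U (l :: s) = U [:: l] ++ U s.
Proof. by rewrite -U_cat. Qed.

Lemma U_Lb s : U (Lb :: s) = Lb :: U s.
Proof. by []. Qed.

Lemma wlt_U s t : wlt (U s) (U t) = wlt s t.
Proof.
elim: s t => [|x s IHs] [|y t] //; first by case: y.
  by rewrite U_cons; case: x.
by rewrite U_cons [U (y :: t)]U_cons; case: x; case: y => //=; rewrite IHs.
Qed.

Lemma rev_Ubar X : rev (Ubar X) = Ubar (rev X).
Proof.
elim: X => [|x X IHX] //.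
rewrite /Ubar U_cons rev_cons rev_cat rcons_cat.
have -> : rcons (rev (U [:: x])) Lb = Lb :: U [:: x] by case: x.
by rewrite -cat_rcons -rev_cons -/(Ubar X) IHX rev_cons -cats1 U_cat.
Qed.

Lemma U_eq_cat_La w X' Y' : U w = X' ++ La :: Y' ->
  exists X Y, [/\ w = X ++ La :: Y, X' = U X & Y' = Lb :: U Y].
Proof.
elim: w X' => [|[] w IHw] [|x X'] //=; rewrite U_cons => /=.
- by case=> <-; exists [::], w.
- case=> <-; case: X' => [|y X'] //= [<-] /IHw [X [Y [-> -> ->]]].
  by exists (La :: X), Y.
- case=> <- /IHw [X [Y [-> -> ->]]].
  by exists (Lb :: X), Y.
Qed.

Lemma admissible_Ubar w : admissible w <-> admissible (Ubar w).
Proof.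
split => [adm [|x X'] Y' //= [<-] /U_eq_cat_La [X [Y [w_eq -> ->]]] | adm X Y w_eq].
  by rewrite -/(Ubar X) rev_Ubar /Ubar -!U_Lb !wlt_U; exact: adm.
have := adm (Ubar X) (Lb :: U Y).
rewrite rev_Ubar /Ubar -!U_Lb !wlt_U; apply.
by rewrite w_eq -cat_cons U_cat.
Qed.

Lemma V_cat s t : V (s ++ t) = V s ++ V t.
Proof. by rewrite /V map_cat flatten_cat. Qed.

Lemma V_cons l s : V (l :: s) = V [:: l] ++ V s.
Proof. by rewrite -V_cat. Qed.

Lemma wlt_V_Lb s t : wlt (V s) (Lb :: t).
Proof. by case: s => [|[] s]. Qed.

Lemma wlt_Lb_V s t : wlt (Lb :: s) (V t) = false.
Proof. by case: t => [|[] t]. Qed.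

Lemma wlt_V s t : wlt (V s) (V t) = wlt s t.
Proof.
elim: s t => [|x s IHs] [|y t] //; first by case: y.
  by rewrite V_cons; case: x.
rewrite V_cons [V (y :: t)]V_cons.
by case: x; case: y => /=; rewrite ?IHs ?wlt_V_Lb //; exact: wlt_Lb_V.
Qed.

Lemma rev_V_La X : La :: rev (V X) = rcons (V (rev X)) La.
Proof.
elim: X => [|x X IHX] //.
rewrite V_cons rev_cat -cat_cons IHX rev_cons -!cats1 V_cat -!catA.
by case: x.
Qed.

Lemma rev_Lb_V X : rev (Lb :: V X) = behead (V (rev (Lb :: X))).
Proof.
rewrite !rev_cons -[rcons (rev X) Lb]cats1 V_cat.
by rewrite -[V [:: Lb]]/([:: La] ++ [:: Lb]) catA !cats1 -rev_V_La.
Qed.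

Lemma V_eq_cat_La w X' Y' : V w = X' ++ La :: Y' ->
  exists X l Y, [/\ w = X ++ l :: Y, X' = V X & Y' = behead (V (l :: Y))].
Proof.
elim: w X' => [|[] w IHw] [|x X'] //=; rewrite V_cons => /=.
- by case=> <-; exists [::], La, w.
- by case=> <- /IHw [X [l [Y [-> -> ->]]]]; exists (La :: X), l, Y.
- by case=> <-; exists [::], Lb, w.
- case=> <-; case: X' => [|y X'] //= [<-] /IHw [X [l [Y [-> -> ->]]]].
  by exists (Lb :: X), l, Y.
Qed.

Lemma rev_Lb_cons X : exists c Q, rev (Lb :: X) = c :: Q.
Proof. by rewrite rev_cons; case: (rev X) => [|c Q]; do 2 eexists. Qed.

Lemma Vbar_Lb w : Vbar (Lb :: w) = Lb :: V w.
Proof. by []. Qed.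

Lemma admissible_Vbar w : admissible (Lb :: w) -> admissible (Vbar (Lb :: w)).
Proof.
move=> adm [|x X'] Y' //= [<-] /V_eq_cat_La [X [l [Y [w_eq -> ->]]]].
have [c [Q RE]] := rev_Lb_cons X.
rewrite rev_Lb_V RE; case: c RE => RE; case: l w_eq => w_eq /=;
  rewrite ?wlt_V_Lb ?wlt_V //; split=> //.
  have LbX : Lb :: X = rcons (rev Q) La by rewrite -[Lb :: X]revK RE rev_cons.
  have w_eq' : Lb :: w = rev Q ++ La :: Lb :: Y.
    by rewrite w_eq -cat_cons LbX cat_rcons.
  by have [_] := adm _ _ w_eq'; rewrite revK.
have w_eq' : Lb :: w = (Lb :: X) ++ La :: Y by rewrite w_eq.
by have [] := adm _ _ w_eq'; rewrite RE.
Qed.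

Lemma admissible_of_Vbar w : admissible (Vbar (Lb :: w)) -> admissible (Lb :: w).
Proof.
move=> adm [|x X] Y //= [<- w_eq].
have [c [Q RE]] := rev_Lb_cons X.
have adm_V : Vbar (Lb :: w) = (Lb :: V X) ++ La :: V Y by rewrite Vbar_Lb w_eq V_cat.
have [ltXY _] := adm _ _ adm_V; rewrite rev_Lb_V RE in ltXY.
split; first by rewrite RE; case: c RE ltXY => //= _; rewrite wlt_V.
case: Y w_eq {adm_V ltXY} => [|[] Y] w_eq //=.
have adm_V : Vbar (Lb :: w) = (Lb :: V (rcons X La)) ++ La :: Lb :: V Y.
  by rewrite Vbar_Lb w_eq -cat_rcons V_cat.
have [_] := adm _ _ adm_V.
by rewrite /= rev_Lb_V -rcons_cons rev_rcons V_cons /= wlt_V.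
Qed.

Lemma typeI_II_head_Lb T : typeI T \/ typeII T -> exists w, T = Lb :: w.
Proof.
case=> [[[|e1] [es [//= _ [_ ->]]]] | [[|e es] [//= _ [_ ->]]]]; by eexists.
Qed.

Theorem proposition4p2 (T : word) :
  typeI T \/ typeII T ->
  ((3%:R)^-1 < Zc (chain_of T) <-> (3%:R)^-1 < Zc (chain_of (Ubar T))) /\
  ((3%:R)^-1 < Zc (chain_of T) <-> (3%:R)^-1 < Zc (chain_of (Vbar T))).
Proof.
move=> /typeI_II_head_Lb [w ->].
rewrite [Vbar _]Vbar_Lb !Zc_gt_thirdP -Vbar_Lb.
split; first exact: admissible_Ubar.
by split; [exact: admissible_Vbar | exact: admissible_of_Vbar].
Qed.
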